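(* Assume Assumption A and that the limiting chain $X_R$ has $\mathfrak n\ge2$ recurrent classes $\mathscr E_1,\dots,\mathscr E_{\mathfrak n}$. Let $\mathscr E=\bigcup_x\mathscr E_x$, $\breve{\mathscr E}_x=\bigcup_{y\ne x}\mathscr E_y$, let $R^{\mathscr E}_N$ be the jump rates of the trace of $\eta^N$ on $\mathscr E$, and define $$\frac1{\gamma_N}=\sum_{x=1}^{\mathfrak n}\sum_{\eta\in\mathscr E_x}\sum_{\xi\in\breve{\mathscr E}_x}R^{\mathscr E}_N(\eta,\xi).$$ Then $\lim_{N\to\infty}\alpha_N/\gamma_N=0$.
   Context: Setting: $E$ is a fixed finite set; for each $N\ge1$, $(\eta^N_t)$ is a continuous-time irreducible Markov chain on $E$ with jump rates $R_N(\eta,\xi)$ and unique invariant probability measure $\mu_N$. For nonempty $F\subset E$ the trace on $F$ is $\eta^F_t=\eta^N_{S_F(t)}$ with $S_F(t)=\sup\{s:\int_0^s\mathbf 1\{\eta^N_r\in F\}dr\le t\}$, an irreducible Markov chain on $F$ with jump rates $R^F_N$. Ordered families: a finite family of sequences of positive reals $(a^r_N)_{N\ge1}$, $r\in\mathfrak R$, is ordered if for all $r\neq s$ the sequence $\arctan(a^r_N/a^s_N)$ converges. Assumption A: (i) for each $\eta\neq\xi$, either $R_N(\eta,\xi)=0$ for all $N$ or $R_N(\eta,\xi)>0$ for all $N$; let $\mathbb B$ be the set of pairs with positive rates. (ii) For every $m\ge1$ the family $\prod_{(\eta,\xi)\in\mathbb B}R_N(\eta,\xi)^{k(\eta,\xi)}$,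 $k:\mathbb B\to\mathbb Z_+$ with $\sum k=m$, is ordered. Limiting chain: $\alpha_N^{-1}=\sum_\eta\sum_{\xi\ne\eta}R_N(\eta,\xi)$; $R(\eta,\xi)=\lim_N\alpha_NR_N(\eta,\xi)\in[0,1]$ (exists under Assumption A); $X_R$ is the Markov chain on $E$ with rates $R$. *)

From Stdlib Require Import Reals Lra List Relations ClassicalEpsilon Arith.
Open Scope R_scope.

Section FiniteChain.

(* The finite state space E: a type with decidable equality and an
   exhaustive duplicate-free enumeration [el] (supplied in the theorem). *)
Variable E : Type.
Variable Edec : forall x y : E, {x = y} + {x <> y}.
Variable el : list E.

Definition sumE (f : E -> R) : R := fold_right (fun x a => f x + a) 0 el.
Definition prodE (f : E -> R) : R := fold_right (fun x a => f x * a) 1 el.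
Definition sumEn (f : E -> nat) : nat := fold_right (fun x a => (f x + a)%nat) 0%nat el.

Definition offdiag_sum (f : E -> E -> R) : R :=
  sumE (fun x => sumE (fun y => if Edec x y then 0 else f x y)).

Definition alpha (RN : nat -> E -> E -> R) (N : nat) : R := / offdiag_sum (RN N).

(* monomial  prod_{(eta,xi) in B} R_N(eta,xi)^{k(eta,xi)} ; k is represented as a
   function E -> E -> nat vanishing outside B *)
Definition monomial (RN : nat -> E -> E -> R) (k : E -> E -> nat) (N : nat) : R :=
  prodE (fun x => prodE (fun y => if Edec x y then 1 else (RN N x y) ^ (k x y))).

Definition admissible_exponent (RN : nat -> E -> E -> R) (m : nat) (k : E -> E -> nat) : Prop :=
  (forall x y, k x y <> 0%nat -> x <> y /\ (forall N, (1 <= N)%nat -> 0 < RN N x y)) /\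
  sumEn (fun x => sumEn (fun y => if Edec x y then 0%nat else k x y)) = m.

Definition ordered_seqs (a b : nat -> R) : Prop :=
  exists L, Un_cv (fun N => atan (a N / b N)) L.

Definition assumptionA (RN : nat -> E -> E -> R) : Prop :=
  (forall x y, x <> y ->
     (forall N, (1 <= N)%nat -> RN N x y = 0) \/ (forall N, (1 <= N)%nat -> 0 < RN N x y)) /\
  (forall m, (1 <= m)%nat -> forall k k',
     admissible_exponent RN m k -> admissible_exponent RN m k' ->
     ordered_seqs (monomial RN k) (monomial RN k')).

Definition reach (Rt : E -> E -> R) : E -> E -> Prop :=
  clos_refl_trans E (fun a b => a <> b /\ 0 < Rt a b).
Definition irreducible (Rt : E -> E -> R) : Prop := forall a b, reach Rt a b.
Definition communicate (Rt : E -> E -> R) (a b : E) : Prop := reach Rt a b /\ reach Rt b a.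
Definition recurrent_state (Rt : E -> E -> R) (a : E) : Prop :=
  forall b, reach Rt a b -> reach Rt b a.

Definition holding_rate (Rt : E -> E -> R) (x : E) : R :=
  sumE (fun y => if Edec x y then 0 else Rt x y).
Definition jump_prob (Rt : E -> E -> R) (x y : E) : R :=
  if Edec x y then 0 else Rt x y / holding_rate Rt x.

(* probability that the jump chain started at z enters F for the first time at
   step k+1, and does so at xi *)
Fixpoint first_entrance_prob (Rt : E -> E -> R) (F : E -> bool) (k : nat) (z xi : E) : R :=
  match k with
  | O => jump_prob Rt z xi
  | S k' => sumE (fun w => if F w then 0
                           else jump_prob Rt z w * first_entrance_prob Rt F k' w xi)
  end.

Definition lim_seq (u : nat -> R) : R := epsilon (inhabits 0) (fun l => Un_cv u l).

(* P_z[ the jump chain hits F, and first at xi ] *)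
Definition hitting_prob (Rt : E -> E -> R) (F : E -> bool) (z xi : E) : R :=
  lim_seq (sum_f_R0 (fun k => first_entrance_prob Rt F k z xi)).

(* jump rate R^F(eta,xi) of the trace on F, eta <> xi in F:
   lambda(eta) P_eta[ H^+_F < oo, X(H^+_F) = xi ] *)
Definition trace_rate (Rt : E -> E -> R) (F : E -> bool) (eta xi : E) : R :=
  Rt eta xi + sumE (fun z => if F z then 0 else Rt eta z * hitting_prob Rt F z xi).

End FiniteChain.

Definition sum_idx (n : nat) (f : nat -> R) : R :=
  fold_right (fun x a => f x + a) 0 (seq 0 n).
Definition union_cl (n : nat) {E : Type} (Ecl : nat -> E -> bool) (e : E) : bool :=
  existsb (fun x => Ecl x e) (seq 0 n).
Definition union_others (n : nat) {E : Type} (Ecl : nat -> E -> bool) (x : nat) (e : E) : bool :=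
  existsb (fun y => andb (negb (Nat.eqb y x)) (Ecl y e)) (seq 0 n).

Definition inv_gamma {E : Type} (Edec : forall x y : E, {x = y} + {x <> y}) (el : list E)
  (RN : nat -> E -> E -> R) (n : nat) (Ecl : nat -> E -> bool) (N : nat) : R :=
  sum_idx n (fun x =>
    sumE E el (fun eta => if Ecl x eta then
      sumE E el (fun xi => if union_others n Ecl x xi then
        trace_rate E Edec el (RN N) (union_cl n Ecl) eta xi else 0) else 0)).

From Stdlib Require Import Reals List Relations ClassicalEpsilon Lra Lia.
Open Scope R_scope.

(* A recurrent class [E_x] of the limiting chain is closed under [R], so
   [alpha_N R_N(eta, z) -> 0] for [eta] in [E_x] and [z] outside it.  The trace
   rate [R^E_N(eta, xi)] is [R_N(eta, xi)] plus the rates [R_N(eta, z)],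
   [z] outside [E], weighted by hitting probabilities in [[0, 1]].  For [xi] in
   another class every such jump leaves [E_x], hence [alpha_N R^E_N(eta, xi)]
   tends to [0], and so does the finite sum [alpha_N / gamma_N]. *)

Lemma sumE_ext (A : Type) (l : list A) f g :
  (forall x, f x = g x) -> sumE A l f = sumE A l g.
Proof.
  intros H; unfold sumE; induction l as [|a l IH]; simpl; [reflexivity | now rewrite IH, H].
Qed.

Lemma sumE_add (A : Type) (l : list A) f g :
  sumE A l (fun x => f x + g x) = sumE A l f + sumE A l g.
Proof. unfold sumE; induction l as [|a l IH]; simpl; [ring | rewrite IH; ring]. Qed.

Lemma sumE_mulr (A : Type) (l : list A) f c :
  sumE A l (fun x => f x * c) = sumE A l f * c.
Proof. unfold sumE; induction l as [|a l IH]; simpl; [ring | rewrite IH; ring]. Qed.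

Lemma sumE_ge0 (A : Type) (l : list A) f : (forall x, 0 <= f x) -> 0 <= sumE A l f.
Proof. intros H; unfold sumE; induction l as [|a l IH]; simpl; [lra | specialize (H a); lra]. Qed.

Lemma sumE_le (A : Type) (l : list A) f g :
  (forall x, f x <= g x) -> sumE A l f <= sumE A l g.
Proof. intros H; unfold sumE; induction l as [|a l IH]; simpl; [lra | specialize (H a); lra]. Qed.

Lemma sumE_ge_term (A : Type) (l : list A) f y :
  (forall x, 0 <= f x) -> In y l -> f y <= sumE A l f.
Proof.
  intros H Hy; induction l as [|a l IH]; [contradiction|].
  pose proof (sumE_ge0 A l f H); specialize (H a).
  unfold sumE in *; simpl in *; destruct Hy as [<- | Hy]; [lra|].
  specialize (IH Hy); lra.
Qed.

Lemma Rinv_nonneg x : 0 <= x -> 0 <= / x.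
Proof.
  intros H; destruct (Req_dec x 0) as [-> | Hx]; [rewrite Rinv_0; lra|].
  left; apply Rinv_0_lt_compat; lra.
Qed.

Lemma Un_cv_ge_eventually u l b N0 :
  (forall N, (N0 <= N)%nat -> b <= u N) -> Un_cv u l -> b <= l.
Proof.
  intros H C; destruct (Rle_dec b l) as [|Hlt]; [assumption|exfalso].
  destruct (C (b - l) ltac:(lra)) as [N1 HN].
  specialize (HN (max N0 N1) ltac:(lia)); specialize (H (max N0 N1) ltac:(lia)).
  unfold R_dist in HN; apply Rabs_def2 in HN; lra.
Qed.

Lemma Un_cv_le_eventually u l b N0 :
  (forall N, (N0 <= N)%nat -> u N <= b) -> Un_cv u l -> l <= b.
Proof.
  intros H C; destruct (Rle_dec l b) as [|Hlt]; [assumption|exfalso].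
  destruct (C (l - b) ltac:(lra)) as [N1 HN].
  specialize (HN (max N0 N1) ltac:(lia)); specialize (H (max N0 N1) ltac:(lia)).
  unfold R_dist in HN; apply Rabs_def2 in HN; lra.
Qed.

Lemma Un_cv_mul_bounded u v M :
  Un_cv u 0 -> (forall N, (1 <= N)%nat -> Rabs (v N) <= M) ->
  Un_cv (fun N => u N * v N) 0.
Proof.
  intros C B eps Heps.
  assert (HM : 0 <= M) by (specialize (B 1%nat (le_n _)); pose proof (Rabs_pos (v 1%nat)); lra).
  destruct (C (eps / (M + 1))) as [N HN]; [apply Rdiv_lt_0_compat; lra|].
  exists (max N 1); intros m Hm.
  specialize (HN m ltac:(lia)); specialize (B m ltac:(lia)).
  unfold R_dist in *; rewrite Rminus_0_r in *; rewrite Rabs_mult.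
  assert (Hu : Rabs (u m) * (M + 1) < eps).
  { apply (Rmult_lt_compat_r (M + 1)) in HN; [|lra].
    unfold Rdiv in HN; rewrite Rmult_assoc, Rinv_l in HN by lra; lra. }
  pose proof (Rabs_pos (u m)).
  assert (Rabs (u m) * Rabs (v m) <= Rabs (u m) * (M + 1)) by (apply Rmult_le_compat_l; lra).
  lra.
Qed.

Lemma Un_cv_mul0 (a : nat -> R) : Un_cv (fun N => a N * 0) 0.
Proof.
  intros eps Heps; exists 0%nat; intros m _; unfold R_dist.
  rewrite Rmult_0_r, Rminus_0_r, Rabs_R0; lra.
Qed.

Lemma Un_cv_plus0 u v : Un_cv u 0 -> Un_cv v 0 -> Un_cv (fun N => u N + v N) 0.
Proof. intros Hu Hv; rewrite <- (Rplus_0_r 0); now apply CV_plus. Qed.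

Lemma Un_cv_mul_sumE0 (A : Type) (l : list A) (a : nat -> R) (g : nat -> A -> R) :
  (forall i, In i l -> Un_cv (fun N => a N * g N i) 0) ->
  Un_cv (fun N => a N * sumE A l (g N)) 0.
Proof.
  intros H; induction l as [|i l IH].
  - exact (Un_cv_mul0 a).
  - apply (Un_cv_ext (fun N => a N * g N i + a N * sumE A l (g N))).
    { intros N; unfold sumE; simpl; ring. }
    apply Un_cv_plus0.
    + apply H; now left.
    + apply IH; intros j Hj; apply H; now right.
Qed.

Section HittingProbability.

Variables (E : Type) (Edec : forall x y : E, {x = y} + {x <> y}) (el : list E).
Hypothesis el_full : forall x, In x el.
Variable Rt : E -> E -> R.
Hypothesis Rt_ge0 : forall x y, x <> y -> 0 <= Rt x y.
Variables (F : E -> bool) (xi : E).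
Hypothesis F_xi : F xi = true.

Notation p := (jump_prob E Edec el Rt).
Notation fe := (first_entrance_prob E Edec el Rt F).

Lemma jump_prob_ge0 z y : 0 <= p z y.
Proof.
  unfold jump_prob; destruct (Edec z y); [lra|].
  apply Rmult_le_pos; [now apply Rt_ge0|]; apply Rinv_nonneg.
  apply sumE_ge0; intros w; destruct (Edec z w); [lra | now apply Rt_ge0].
Qed.

(* When [z] is absorbing the holding rate is [0] and so is every [p z y]. *)
Lemma jump_prob_sum_le1 z : sumE E el (p z) <= 1.
Proof.
  rewrite (sumE_ext _ _ _
    (fun y => (if Edec z y then 0 else Rt z y) * / holding_rate E Edec el Rt z)).
  2:{ intros y; unfold jump_prob; destruct (Edec z y); unfold Rdiv; ring. }
  rewrite sumE_mulr; fold (holding_rate E Edec el Rt z).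
  destruct (Req_dec (holding_rate E Edec el Rt z) 0) as [-> | Hz]; [lra|].
  rewrite Rinv_r; lra.
Qed.

Lemma jump_prob_target_outside_le1 z :
  p z xi + sumE E el (fun w => if F w then 0 else p z w) <= 1.
Proof.
  eapply Rle_trans; [|apply (jump_prob_sum_le1 z)].
  rewrite (sumE_ext _ _ (p z) (fun y => (if F y then p z y else 0) + (if F y then 0 else p z y))).
  2:{ intros y; destruct (F y); ring. }
  rewrite sumE_add; apply Rplus_le_compat_r.
  pose proof (sumE_ge_term E el (fun y => if F y then p z y else 0) xi) as T.
  simpl in T; rewrite F_xi in T; apply T; [|apply el_full].
  intros y; destruct (F y); [apply jump_prob_ge0 | lra].
Qed.

Lemma first_entrance_prob_ge0 k z : 0 <= fe k z xi.
Proof.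
  revert z; induction k as [|k IH]; intros z; simpl; [apply jump_prob_ge0|].
  apply sumE_ge0; intros w; destruct (F w); [lra|].
  apply Rmult_le_pos; [apply jump_prob_ge0 | apply IH].
Qed.

Let entrance_partial_sum K z := sum_f_R0 (fun k => fe k z xi) K.

Lemma entrance_partial_sum_S K z :
  entrance_partial_sum (S K) z =
  p z xi + sumE E el (fun w => if F w then 0 else p z w * entrance_partial_sum K w).
Proof.
  revert z; induction K as [|K IH]; intros z; [reflexivity|].
  unfold entrance_partial_sum in *; rewrite tech5, IH; simpl (fe (S (S K)) z xi).
  rewrite Rplus_assoc, <- sumE_add; f_equal.
  apply sumE_ext; intros w; destruct (F w); [ring|]; rewrite tech5; simpl (fe (S K) w xi); ring.
Qed.

Lemma entrance_partial_sum_bounds K z : 0 <= entrance_partial_sum K z <= 1.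
Proof.
  split.
  - apply cond_pos_sum; intros k; apply first_entrance_prob_ge0.
  - revert z; induction K as [|K IH]; intros z.
    + eapply Rle_trans; [|apply (jump_prob_target_outside_le1 z)].
      assert (0 <= sumE E el (fun w => if F w then 0 else p z w));
        [|unfold entrance_partial_sum; simpl; lra].
      apply sumE_ge0; intros w; destruct (F w); [lra | apply jump_prob_ge0].
    + rewrite entrance_partial_sum_S.
      eapply Rle_trans; [|apply (jump_prob_target_outside_le1 z)]; apply Rplus_le_compat_l.
      apply sumE_le; intros w; destruct (F w); [lra|].
      pose proof (IH w); pose proof (jump_prob_ge0 z w).
      rewrite <- (Rmult_1_r (p z w)) at 2; apply Rmult_le_compat_l; lra.
Qed.

(* The partial sums increase and stay below [1], so the series converges and
   the [epsilon] in [lim_seq] picks its genuine limit. *)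
Lemma hitting_prob_abs_le1 z : Rabs (hitting_prob E Edec el Rt F z xi) <= 1.
Proof.
  unfold hitting_prob, lim_seq.
  set (P := Un_cv (sum_f_R0 (fun k => fe k z xi))).
  assert (Hex : exists l, P l).
  { destruct (growing_cv (fun K => entrance_partial_sum K z)) as [l Hl].
    - intros K; unfold entrance_partial_sum; rewrite tech5.
      pose proof (first_entrance_prob_ge0 (S K) z); lra.
    - exists 1; intros x [K ->]; apply entrance_partial_sum_bounds.
    - now exists l. }
  pose proof (epsilon_spec (inhabits 0) P Hex) as Hlim.
  apply Rabs_le; split.
  - apply (Un_cv_ge_eventually _ _ _ 0 (fun K _ => proj1 (entrance_partial_sum_bounds K z)))
      in Hlim; lra.
  - exact (Un_cv_le_eventually _ _ _ 0 (fun K _ => proj2 (entrance_partial_sum_bounds K z)) Hlim).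
Qed.

End HittingProbability.

Lemma trace_rate_scaled_cv0 (E : Type) (Edec : forall x y : E, {x = y} + {x <> y})
  (el : list E) (el_full : forall x, In x el) (RN : nat -> E -> E -> R) (a : nat -> R)
  (F : E -> bool) (eta xi : E) :
  (forall N, (1 <= N)%nat -> forall x y, x <> y -> 0 <= RN N x y) ->
  F xi = true ->
  Un_cv (fun N => a N * RN N eta xi) 0 ->
  (forall z, F z = false -> Un_cv (fun N => a N * RN N eta z) 0) ->
  Un_cv (fun N => a N * trace_rate E Edec el (RN N) F eta xi) 0.
Proof.
  intros RN_ge0 F_xi direct_cv0 exit_cv0; unfold trace_rate.
  eapply Un_cv_ext; [intros N; symmetry; apply Rmult_plus_distr_l|].
  apply Un_cv_plus0; [exact direct_cv0|].
  apply Un_cv_mul_sumE0; intros z _; destruct (F z) eqn:Fz; [apply Un_cv_mul0|].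
  eapply Un_cv_ext; [intros N; apply Rmult_assoc|].
  apply Un_cv_mul_bounded with 1; [now apply exit_cv0|].
  intros N HN; apply hitting_prob_abs_le1; auto.
Qed.

Lemma recurrent_class_exit_rate0 (E : Type) (Rt : E -> E -> R) (e0 eta z : E) :
  (forall x y, x <> y -> 0 <= Rt x y) -> recurrent_state E Rt e0 ->
  communicate E Rt e0 eta -> ~ communicate E Rt e0 z -> eta <> z -> Rt eta z = 0.
Proof.
  intros Rt_ge0 e0_rec [e0_eta _] e0_z eta_z.
  destruct (Rt_ge0 eta z eta_z) as [Hpos | ->]; [exfalso | reflexivity].
  assert (reach_z : reach E Rt e0 z) by (eapply rt_trans; [exact e0_eta | now apply rt_step]).
  exact (e0_z (conj reach_z (e0_rec z reach_z))).
Qed.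

Lemma assumptionA_rates_ge0 (E : Type) (Edec : forall x y : E, {x = y} + {x <> y})
  (el : list E) (RN : nat -> E -> E -> R) :
  assumptionA E Edec el RN -> forall N, (1 <= N)%nat -> forall x y, x <> y -> 0 <= RN N x y.
Proof.
  intros [HA _] N HN x y Hxy; destruct (HA x y Hxy) as [H | H]; specialize (H N HN); lra.
Qed.

Lemma alpha_ge0 (E : Type) (Edec : forall x y : E, {x = y} + {x <> y})
  (el : list E) (RN : nat -> E -> E -> R) N :
  (forall x y, x <> y -> 0 <= RN N x y) -> 0 <= alpha E Edec el RN N.
Proof.
  intros RN_ge0; apply Rinv_nonneg, sumE_ge0; intros x; apply sumE_ge0; intros y.
  destruct (Edec x y); [lra | now apply RN_ge0].
Qed.

Section ClassUnions.

Variables (E : Type) (n : nat) (Ecl : nat -> E -> bool).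

Lemma union_others_cl x e : union_others n Ecl x e = true -> union_cl n Ecl e = true.
Proof.
  unfold union_others, union_cl; rewrite !existsb_exists.
  intros [y [Hy Hye]]; apply andb_prop in Hye; now exists y.
Qed.

Lemma union_others_not_own x e :
  (forall x y e, (x < n)%nat -> (y < n)%nat -> x <> y -> Ecl x e = true -> Ecl y e = false) ->
  (x < n)%nat -> union_others n Ecl x e = true -> Ecl x e = false.
Proof.
  intros Hdisj Hx; unfold union_others; rewrite existsb_exists.
  intros [y [Hy Hye]]; apply in_seq in Hy; apply andb_prop in Hye as [Hyx Hye].
  apply Bool.negb_true_iff, Nat.eqb_neq in Hyx; apply (Hdisj y); auto; lia.
Qed.

Lemma union_cl_false x e : (x < n)%nat -> union_cl n Ecl e = false -> Ecl x e = false.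
Proof.
  intros Hx He; destruct (Ecl x e) eqn:Hxe; [|reflexivity].
  rewrite <- He; symmetry; unfold union_cl; apply existsb_exists.
  exists x; split; [apply in_seq; lia | exact Hxe].
Qed.

End ClassUnions.

Theorem mainTheorem14
  (E : Type) (Edec : forall x y : E, {x = y} + {x <> y})
  (el : list E) (el_nodup : NoDup el) (el_full : forall x : E, In x el)
  (RN : nat -> E -> E -> R)
  (HA : assumptionA E Edec el RN)
  (Hirr : forall N, (1 <= N)%nat -> irreducible E (RN N))
  (Rlim : E -> E -> R)
  (HRlim : forall x y, x <> y ->
     Un_cv (fun N => alpha E Edec el RN N * RN N x y) (Rlim x y))
  (n : nat) (Hn : (2 <= n)%nat) (Ecl : nat -> E -> bool)
  (Hcl : forall x, (x < n)%nat -> exists e0, recurrent_state E Rlim e0 /\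
           forall e, Ecl x e = true <-> communicate E Rlim e0 e)
  (Hdisj : forall x y e, (x < n)%nat -> (y < n)%nat -> x <> y ->
           Ecl x e = true -> Ecl y e = false)
  (Hcover : forall e, recurrent_state E Rlim e ->
           exists x, (x < n)%nat /\ Ecl x e = true) :
  Un_cv (fun N => alpha E Edec el RN N * inv_gamma Edec el RN n Ecl N) 0.
Proof.
  pose proof (assumptionA_rates_ge0 E Edec el RN HA) as RN_ge0.
  assert (Rlim_ge0 : forall x y, x <> y -> 0 <= Rlim x y).
  { intros x y Hxy; apply (Un_cv_ge_eventually _ _ _ 1 (fun N HN =>
      Rmult_le_pos _ _ (alpha_ge0 E Edec el RN N (RN_ge0 N HN)) (RN_ge0 N HN x y Hxy))).
    exact (HRlim x y Hxy). }
  assert (class_exit_cv0 : forall x eta z, (x < n)%nat -> Ecl x eta = true ->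
            Ecl x z = false -> Un_cv (fun N => alpha E Edec el RN N * RN N eta z) 0).
  { intros x eta z Hx Heta Hz; assert (eta_z : eta <> z) by congruence.
    destruct (Hcl x Hx) as [e0 [e0_rec Hiff]].
    rewrite <- (recurrent_class_exit_rate0 E Rlim e0 eta z); auto.
    - now apply Hiff.
    - rewrite <- Hiff; congruence. }
  unfold inv_gamma, sum_idx.
  apply Un_cv_mul_sumE0; intros x Hx; apply in_seq in Hx.
  apply Un_cv_mul_sumE0; intros eta _; destruct (Ecl x eta) eqn:Heta; [|apply Un_cv_mul0].
  apply Un_cv_mul_sumE0; intros xi _; destruct (union_others n Ecl x xi) eqn:Hxi;
    [|apply Un_cv_mul0].
  apply trace_rate_scaled_cv0; auto.
  - now apply union_others_cl with x.
  - apply (class_exit_cv0 x); [lia | exact Heta | now apply (union_others_not_own E n)].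
  - intros z Hz; apply (class_exit_cv0 x); [lia | exact Heta|].
    apply (union_cl_false E n); [lia | exact Hz].
Qed.
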